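(* Let $r,m\in\mathbb{N}$, let $E\subset\mathbb{R}^r$ be a compact domain and let $f:E\to\mathbb{R}^m$ be a solvable function. Then there exists a countable ordinal $\alpha<\omega_1$ such that $E_\alpha=\emptyset$, where $\{E_\gamma\}_\gamma$ is the sequence of $f$-removed sets on $E$.
   Context: A compact domain is a nonempty connected compact subset of $\mathbb{R}^r$; $\omega_1$ is the first uncountable ordinal. For $S\subseteq\mathbb{R}^r$ and $g:S\to\mathbb{R}^m$, $D_g$ is the set of points of $S$ at which $g$ is discontinuous with respect to the subspace topology of $S$. The sequence of $f$-removed sets on $E$: $E_0=E$; $E_{\alpha+1}=D_{f\restriction_{E_\alpha}}$; $E_\lambda=\bigcap_{\beta<\lambda}E_\beta$ for limit $\lambda$. A function $f:E\to\mathbb{R}^m$ is solvable if it is of class Baire one (a pointwise limit on $E$ of a sequence of continuous functions $E\to\mathbb{R}^m$) and for every closed set $K\subseteq E$ the set $D_{f\restriction_K}$ is closed. *)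

From HB Require Import structures.
From mathcomp Require Import all_boot all_order all_algebra.
From mathcomp Require Import all_classical all_reals topology normedtype sequences.
Set Implicit Arguments. Unset Strict Implicit. Unset Printing Implicit Defensive.
Import Order.TTheory GRing.Theory Num.Theory.
Import numFieldNormedType.Exports.
Local Open Scope classical_set_scope.
Local Open Scope ring_scope.

Section Defs.
Variables (R : realType) (r m : nat).
Local Notation V := 'rV[R]_r.
Local Notation W := 'rV[R]_m.

Definition compact_domain (E : set V) : Prop :=
  E !=set0 /\ connected E /\ compact E.

(* D_g for g restricted to S: points of S where g|_S is discontinuous
   (subspace topology of S) *)
Definition disc_set (S : set V) (g : V -> W) : set V :=
  [set x | S x /\ ~ (g @ within S (nbhs x) --> g x)].

Definition baire_one (E : set V) (f : V -> W) : Prop :=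
  exists g : nat -> V -> W,
    (forall n, {within E, continuous (g n)}) /\
    (forall x, E x -> (fun n => g n x) @ \oo --> f x).

Definition solvable (E : set V) (f : V -> W) : Prop :=
  baire_one E f /\
  (forall K : set V, closed K -> K `<=` E -> closed (disc_set K f)).

(* A countable well-order (T, lt): each t : T stands for the countable
   ordinal alpha = order type of {s | lt s t}. *)
Definition countable_wellorder (T : Type) (lt : T -> T -> Prop) : Prop :=
  well_founded lt /\
  (forall a b c, lt a b -> lt b c -> lt a c) /\
  (forall a b, lt a b \/ a = b \/ lt b a) /\
  (exists h : T -> nat, injective h).

Definition removed_sequence (T : Type) (lt : T -> T -> Prop)
    (E : set V) (f : V -> W) (S : T -> set V) : Prop :=
  forall t,
    ((forall s, ~ lt s t) -> S t = E) /\
    (forall s, lt s t -> (forall u, ~ (lt s u /\ lt u t)) ->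
       S t = disc_set (S s) f) /\
    ((exists s, lt s t) -> (forall s, lt s t -> exists u, lt s u /\ lt u t) ->
       S t = \bigcap_(s in [set s | lt s t]) S s).
End Defs.

From HB Require Import structures.
From mathcomp Require Import all_boot all_order all_algebra.
From mathcomp Require Import all_classical all_reals topology normedtype sequences.
From mathcomp Require Import interval_inference lra.
Set Implicit Arguments. Unset Strict Implicit. Unset Printing Implicit Defensive.
Import Order.TTheory GRing.Theory Num.Theory.
Import numFieldNormedType.Exports.
Local Open Scope classical_set_scope.
Local Open Scope ring_scope.

(* The sets [E_alpha] are the members of the least family of subsets of [E]
   containing [E] and closed under [X |-> D_{f|X}] and under nonempty
   intersections.  The extreme-point argument of the Bourbaki-Witt theorem shows
   that this family is well ordered by reverse inclusion, so it indexes the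
   removal sequence without any transfinite recursion.  Every [E_alpha] is
   closed, hence compact, so by the Baire category theorem the Baire-one function
   [f|E_alpha] has a point of continuity when [E_alpha] is nonempty; as
   [D_{f|E_alpha}] is closed, some rational ball meets [E_alpha] and misses
   [E_(alpha+1)].  Distinct stages get distinct balls, so the well order is
   countable, and it ends with the empty set, the only stage fixed by [D]. *)

Lemma exists_injective_code (T : Type) (code : T -> nat -> Prop) :
  (forall t, exists n, code t n) ->
  (forall s t n, code s n -> code t n -> s = t) ->
  exists h : T -> nat, injective h.
Proof.
move=> /choice[h codeh] code_uniq; exists h => s t hst.
by apply: (code_uniq _ _ (h s)) => //; rewrite hst.
Qed.

Lemma meets_not_subset (T : Type) (A X Y : set T) :
  A `&` X !=set0 -> A `&` Y = set0 -> ~ X `<=` Y.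
Proof.
move=> [x [Ax Xx]] AY0 XY; have : (A `&` Y) x by split => //; exact: XY.
by rewrite AY0.
Qed.

Section RemovalTower.
Variables (P : Type) (E : set P) (D : set P -> set P).

Definition tower (G : set P -> Prop) :=
  [/\ G E, (forall X, G X -> G (D X)) &
   (forall (I : Type) (A : set I) (g : I -> set P), A !=set0 ->
      (forall i, A i -> G (g i)) -> G (\bigcap_(i in A) g i))].

(* The least tower: its members are the sets [E_alpha] of the removal sequence. *)
Definition stage (X : set P) := forall G, tower G -> G X.

(* [removed_sequence] for an arbitrary derivation operator [D]. *)
Definition removal_sequence (T : Type) (lt : T -> T -> Prop) (S : T -> set P) :=
  forall t,
    ((forall s, ~ lt s t) -> S t = E) /\
    (forall s, lt s t -> (forall u, ~ (lt s u /\ lt u t)) -> S t = D (S s)) /\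
    ((exists s, lt s t) -> (forall s, lt s t -> exists u, lt s u /\ lt u t) ->
       S t = \bigcap_(s in [set s | lt s t]) S s).

Hypothesis D_sub : forall X, D X `<=` X.

Lemma tower_stage : tower stage.
Proof.
split=> [G [] //|X stX G towG|I A g A0 stg G towG].
- by case: (towG) => _ towD _; exact: towD (stX G towG).
- by case: (towG) => _ _ towI; apply: towI => // i Ai; exact: stg.
Qed.

Lemma stage_sub X : stage X -> X `<=` E.
Proof.
move=> /(_ (fun X => X `<=` E)); apply; split=> //.
- by move=> Y YE x /D_sub /YE.
- by move=> I A g [i Ai] gE x gx; apply: (gE i Ai); exact: gx.
Qed.

(* Extreme points as in the proof of the Bourbaki-Witt theorem, for the order
   reverse to inclusion. *)
Definition extreme (X : set P) :=
  forall Y, stage Y -> X `<=` Y -> X <> Y -> X `<=` D Y.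

Lemma tower_extreme_split X : stage X -> extreme X ->
  tower (fun Y => stage Y /\ (X `<=` Y \/ Y `<=` D X)).
Proof.
move=> stX extX; case: tower_stage => stE stD stI; split.
- by split => //; left; exact: stage_sub.
- move=> Y [stY [XY|YDX]]; split; [exact: stD | | exact: stD | ].
  + have [<-|nXY] := pselect (X = Y); first by right.
    by left; exact: extX.
  + by right => x /D_sub /YDX.
- move=> I A g A0 hA; split; first by apply: stI => // i /hA[].
  have [allX|/existsNP[i /not_implyP[Ai nXg]]] :=
    pselect (forall i, A i -> X `<=` g i).
    by left => x Xx i Ai; exact: allX.
  have [_ [//|gDX]] := hA i Ai.
  by right => x gx; apply: gDX; exact: gx.
Qed.

Lemma tower_extreme : tower (fun X => stage X /\ extreme X).
Proof.
case: tower_stage => stE stD stI; split.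
- split => // Y stY EY nEY; exfalso; apply: nEY.
  by rewrite eqEsubset; split => //; exact: stage_sub.
- move=> X [stX extX]; split=> [|Y stY DXY nDXY]; first exact: stD.
  have [_ [XY|YDX]] := stY _ (tower_extreme_split stX extX); last first.
    by exfalso; apply: nDXY; rewrite eqEsubset.
  have [<-//|nXY] := pselect (X = Y).
  by move=> x /D_sub /(extX Y stY XY nXY).
- move=> I A g A0 hA; split=> [|Y stY IY nIY]; first by apply: stI => // i /hA[].
  have [allY|/existsNP[i /not_implyP[Ai nYg]]] :=
    pselect (forall i, A i -> Y `<=` g i).
    by exfalso; apply: nIY; rewrite eqEsubset; split => // x Yx i Ai; exact: allY.
  have [stg extg] := hA i Ai.
  have [_ [gY|YDg]] := stY _ (tower_extreme_split stg extg); last first.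
    by exfalso; apply: nYg => x /YDg /D_sub.
  have ngY : g i <> Y by move=> e; apply: nYg; rewrite e.
  by move=> x Ix; apply: (extg Y stY gY ngY); exact: Ix.
Qed.

Lemma stage_total X Y : stage X -> stage Y -> X `<=` Y \/ Y `<=` D X.
Proof.
move=> stX stY; have [_ extX] := stX _ tower_extreme.
by have [_] := stY _ (tower_extreme_split stX extX).
Qed.

Variables (admissible : set P -> Prop) (B : nat -> set P).
Hypothesis tower_admissible : tower admissible.
Hypothesis separating : forall X, admissible X -> X !=set0 ->
  exists n, B n `&` X !=set0 /\ B n `&` D X = set0.

Lemma stage_admissible X : stage X -> admissible X.
Proof. by move=> /(_ _ tower_admissible). Qed.

Lemma stage_D_proper X : stage X -> X !=set0 -> D X <> X.
Proof.
move=> /stage_admissible admX X0 DXX.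
have [n [BX BDX]] := separating admX X0.
by apply: (meets_not_subset BX BDX); rewrite DXX.
Qed.

(* The least stage [M] above [G] lies in [G]: otherwise [G] would be contained
   in [D M], making [M] a fixed point of [D]. *)
Lemma stage_greatest (G : set P -> Prop) : G `<=` stage -> G !=set0 ->
  exists2 M, G M & forall X, G X -> X `<=` M.
Proof.
move=> Gst [X0 GX0]; case: tower_stage => _ stD stI.
pose U := [set X | stage X /\ forall Y, G Y -> Y `<=` X].
pose M := \bigcap_(X in U) X.
have stM : stage M.
  apply: stI => [|X []//]; exists E; split; last by move=> Y /Gst /stage_sub.
  by case: tower_stage.
have GM Y : G Y -> Y `<=` M by move=> GY x Yx X [_ UX]; exact: UX GY x Yx.
exists M => //; apply: contrapT => nGM.
have GDM Y : G Y -> Y `<=` D M.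
  move=> GY; have [MY|//] := stage_total stM (Gst Y GY).
  by exfalso; apply: nGM; suff -> : M = Y by []; rewrite eqEsubset; split; [|exact: GM].
have DMM : D M = M.
  by rewrite eqEsubset; split => // x Mx; apply: (Mx (D M)); split => //; exact: stD.
have [M0|/nonemptyPn M0] := pselect (M !=set0); first exact: stage_D_proper stM M0 DMM.
by apply: nGM; suff <- : X0 = M by []; rewrite M0 -subset0 -M0; exact: GM.
Qed.

Lemma stage_set0 : stage set0.
Proof.
case: tower_stage => stE stD stI.
pose M := \bigcap_(X in stage) X.
have stM : stage M by apply: stI => //; exists E.
have DMM : D M = M.
  by rewrite eqEsubset; split => // x Mx; apply: Mx; exact: stD.
have [M0|/nonemptyPn <- //] := pselect (M !=set0).
by have := stage_D_proper stM M0 DMM.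
Qed.

Lemma separated_stage_eq k X Y : stage X -> stage Y ->
  B k `&` X !=set0 -> B k `&` D X = set0 ->
  B k `&` Y !=set0 -> B k `&` D Y = set0 -> X = Y.
Proof.
move=> stX stY BX BDX BY BDY; rewrite eqEsubset; split.
- by have [//|/(meets_not_subset BY BDX)] := stage_total stX stY.
- by have [//|/(meets_not_subset BX BDY)] := stage_total stY stX.
Qed.

Definition stage_type := {X : set P | stage X}.

Definition stage_lt (a b : stage_type) := sval b `<=` sval a /\ sval b <> sval a.

Lemma stage_type_eq (a b : stage_type) : sval a = sval b -> a = b.
Proof. by case: a b => [X stX] [Y stY] /= XY; exact: eq_exist. Qed.

Lemma stage_lt_wf : well_founded stage_lt.
Proof.
move=> a; apply: contrapT => nAa.
pose G := [set X | exists2 b : stage_type, sval b = X & ~ Acc stage_lt b].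
have [M [b bM nAb] maxM] : exists2 M, G M & forall X, G X -> X `<=` M.
  by apply: stage_greatest; [move=> X [b <- _]; exact: svalP | exists (sval a), a].
apply: nAb; constructor => c [cb ncb]; apply: contrapT => nAc; apply: ncb.
by rewrite eqEsubset; split => //; rewrite bM; apply: maxM; exists c.
Qed.

Lemma stage_lt_trans (a b c : stage_type) : stage_lt a b -> stage_lt b c -> stage_lt a c.
Proof.
move=> [ba nba] [cb ncb]; split=> [x /cb /ba //|eca]; apply: ncb.
by rewrite eqEsubset; split => //; rewrite eca.
Qed.

Lemma stage_lt_total (a b : stage_type) : stage_lt a b \/ a = b \/ stage_lt b a.
Proof.
have [ab|nab] := pselect (sval a = sval b); first by right; left; exact: stage_type_eq.
have [ab|baD] := stage_total (svalP a) (svalP b).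
  by right; right; split => // e; apply: nab.
by left; split=> [x /baD /D_sub //|e]; apply: nab.
Qed.

(* A nonempty stage is coded by a basic set meeting it but missing its
   derived set. *)
Lemma stage_type_countable : exists h : stage_type -> nat, injective h.
Proof.
pose code (a : stage_type) n := match n with
  | 0 => sval a = set0
  | k.+1 => B k `&` sval a !=set0 /\ B k `&` D (sval a) = set0 end.
apply: (@exists_injective_code _ code) => [a|a b [|k]].
- have [a0|/nonemptyPn a0] := pselect (sval a !=set0); last by exists 0%N.
  by have [k] := separating (stage_admissible (svalP a)) a0; exists k.+1.
- by move=> /= a0 b0; apply: stage_type_eq; rewrite a0 b0.
- move=> [Ba BDa] [Bb BDb]; apply: stage_type_eq.
  exact: separated_stage_eq (svalP a) (svalP b) Ba BDa Bb BDb.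
Qed.

Lemma stage_removal_sequence : removal_sequence stage_lt (@sval _ _).
Proof.
case: tower_stage => stE stD stI.
move=> [Y stY]; split; [|split].
- move=> nlt; apply: contrapT => nEY; apply: (nlt (exist _ E stE)).
  by split => //=; exact: stage_sub.
- move=> [X stX] [/= YX nYX] nobtw /=.
  have X0 : X !=set0.
    apply: contrapT => /nonemptyPn X0; apply: nYX.
    by rewrite eqEsubset; split => //; rewrite X0.
  have [XY|YDX] := stage_total stX stY.
    by exfalso; apply: nYX; rewrite eqEsubset.
  apply: contrapT => nY; apply: (nobtw (exist _ (D X) (stD _ stX))).
  by split; split => //=; exact: stage_D_proper.
- move=> [s0 ls0] nolim /=.
  set I := \bigcap_(s in [set s | stage_lt s (exist _ Y stY)]) sval s.
  have stI' : stage I by apply: stI; [exists s0 | move=> [X stX] _].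
  have YI : Y `<=` I by move=> x Yx s [sY _]; exact: sY.
  apply: contrapT => nYI.
  have [u [[uI nuI] [Yu nYu]]] := nolim (exist _ I stI') (conj YI nYI).
  by apply: nuI; rewrite eqEsubset; split => //= x Ix; apply: Ix.
Qed.

Theorem exists_removal_sequence :
  exists (T : Type) (lt : T -> T -> Prop) (S : T -> set P) (t : T),
    countable_wellorder lt /\ removal_sequence lt S /\ S t = set0.
Proof.
exists stage_type, stage_lt, (@sval _ _), (exist _ set0 stage_set0).
split; last by split; [exact: stage_removal_sequence|].
split; first exact: stage_lt_wf.
split; first exact: stage_lt_trans.
by split; [exact: stage_lt_total | exact: stage_type_countable].
Qed.

End RemovalTower.

Section ContinuityPoint.
Variables (R : realType) (r m : nat).
Local Notation V := 'rV[R]_r.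
Local Notation W := 'rV[R]_m.

Lemma natSinv_lt (e : R) : 0 < e -> exists k : nat, k.+1%:R^-1 < e.
Proof.
move=> e0; have [k _ /(_ k (leqnn k)) ke] := near_infty_natSinv_lt (PosNum e0).
by exists k.
Qed.

Lemma within_continuous_dist (K : set V) (g : V -> W) y e :
  {within K, continuous g} -> K y -> 0 < e ->
  exists2 d, 0 < d & forall z, K z -> `|y - z| < d -> `|g y - g z| < e.
Proof.
move=> /subspace_continuousP gc Ky e0.
have /cvgrPdist_lt/(_ e e0)/nbhs_normP[d /= d0 yd] := gc y Ky.
by exists d => // z Kz yz; exact: yd.
Qed.

Lemma cvg_dist_eventually (u : nat -> W) (l : W) e : u @ \oo --> l -> 0 < e ->
  exists N, forall i, (N <= i)%N -> `|l - u i| < e.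
Proof. by move=> /cvgrPdist_lt ul e0; have [N _ ?] := ul e e0; exists N. Qed.

Lemma within_cvg_dist (K : set V) (f : V -> W) z :
  (forall e, 0 < e -> exists2 d, 0 < d &
     forall y, K y -> `|z - y| < d -> `|f z - f y| <= e) ->
  f @ within K (nbhs z) --> f z.
Proof.
move=> fz; apply/cvgrPdist_le => e e0; have [d d0 zd] := fz e e0.
suff : \forall y \near z, K y -> `|f z - f y| <= e by [].
by apply/nbhs_normP; exists d => //= y zy Ky; exact: zd.
Qed.

(* Cantor's intersection theorem along a sequence of shrinking balls whose
   [k]-th center and radius may be chosen to satisfy [Q k]. *)
Lemma nested_balls (K : set V) (Q : nat -> V -> R -> Prop) (x0 : V) (rho0 : R) :
  compact K -> K x0 -> 0 < rho0 ->
  (forall k x rho, K x -> 0 < rho -> (forall y, `|x - y| < rho -> `|x0 - y| < rho0) ->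
     exists x' d, [/\ K x', 0 < d, (forall y, `|x' - y| <= d -> `|x - y| < rho)
                   & Q k x' d]) ->
  exists2 z, K z & forall k, exists x d, Q k x d /\ `|x - z| < d.
Proof.
move=> cK Kx0 rho00 step.
pose admissible (p : V * R) :=
  [/\ K p.1, 0 < p.2 & forall y, `|p.1 - y| < p.2 -> `|x0 - y| < rho0].
have step' (kp : nat * (V * R)) : exists p' : V * R, admissible kp.2 ->
    [/\ K p'.1, 0 < p'.2, (forall y, `|p'.1 - y| <= p'.2 -> `|kp.2.1 - y| < kp.2.2)
      & Q kp.1 p'.1 p'.2].
  case: kp => k [x rho]; have [[Kx rho_gt0 sub]|nadm] := pselect (admissible (x, rho)).
    by have [x' [d ?]] := step k x rho Kx rho_gt0 sub; exists (x', d).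
  by exists (x0, rho0) => /nadm.
have [next nextP] := choice step'.
pose s := nat_rect (fun _ => (V * R)%type) (x0, rho0) (fun k p => next (k, p)).
have s_admissible k : admissible (s k).
  elim: k => [|k IH]; first by split.
  have [Ks d0 sub _] := nextP (k, s k) IH; split => // y sy.
  by case: IH => _ _; apply; apply: sub; exact: ltW.
have sP k : (forall y, `|(s k.+1).1 - y| <= (s k.+1).2 -> `|(s k).1 - y| < (s k).2)
    /\ Q k (s k.+1).1 (s k.+1).2.
  by have [_ _ ? ?] := nextP (k, s k) (s_admissible k).
pose C n := [set y | `|(s n.+1).1 - y| <= (s n.+1).2].
have C_decr n p : (n <= p)%N -> C p `<=` C n.
  move=> /subnK <-; elim: (p - n)%N => [|j IH] //= y Cy.
  by apply/IH/ltW/(sP (j + n).+1).1; rewrite -addSn.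
have C_closed n : closed (C n).
  have := @closed_ball_closed _ _ (s n.+1).1 (s n.+1).2.
  by rewrite closed_ballE //; case: (s_admissible n.+1).
have [z [Kz clz]] : exists z, K z /\ cluster ((fun n => (s n.+1).1) @ \oo) z.
  by apply: cK; exists 0%N => // n _; case: (s_admissible n.+1).
have Cz n : C n z.
  rewrite ((closure_id (C n)).1 (C_closed n)); move: clz; rewrite clusterE; apply.
  exists n => // p /= np; apply: (C_decr n p np).
  by rewrite /C /= subrr normr0; case: (s_admissible p.+1) => _ /ltW.
exists z => // k; exists (s k.+1).1, (s k.+1).2.
by split; [exact: (sP k).2 | exact: (sP k.+1).1 (Cz k.+1)].
Qed.

(* The Baire category theorem in a compact set [K]; the third hypothesis says
   that each [F n] is relatively closed in [K]. *)
Lemma compact_baire (K : set V) (F : nat -> set V) : compact K ->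
  (forall y, K y -> exists n, F n y) ->
  (forall n y, K y -> ~ F n y ->
     exists2 e, 0 < e & forall z, K z -> `|y - z| < e -> ~ F n z) ->
  forall x rho, K x -> 0 < rho -> exists n x1 d,
    [/\ K x1, 0 < d, (forall y, `|x1 - y| < d -> `|x - y| < rho) &
        (forall y, K y -> `|x1 - y| < d -> F n y)].
Proof.
move=> cK cover Fclosed x rho Kx rho0; apply: contrapT => noball.
pose Q k x' d := forall z, K z -> `|x' - z| < d -> ~ F k z.
have step k x' rho' : K x' -> 0 < rho' ->
    (forall y, `|x' - y| < rho' -> `|x - y| < rho) ->
    exists x'' d, [/\ K x'', 0 < d, (forall y, `|x'' - y| <= d -> `|x' - y| < rho')
                    & Q k x'' d].
  move=> Kx' rho'0 sub.
  have [y [Ky x'y nFy]] : exists y, [/\ K y, `|x' - y| < rho' & ~ F k y].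
    apply: contrapT => nex; apply: noball; exists k, x', rho'; split => // y Ky x'y.
    by apply: contrapT => nFy; apply: nex; exists y.
  have [e e0 ye] := Fclosed k y Ky nFy.
  pose d := Num.min e (rho' - `|x' - y|) / 2.
  have d0 : 0 < d by rewrite divr_gt0 // lt_min e0 subr_gt0.
  have [de dr] : d < e /\ d < rho' - `|x' - y|.
    by apply/andP; rewrite -lt_min gtr_pMr ?invf_lt1 ?ltr1n // lt_min e0 subr_gt0.
  exists y, d; split => // [w yw|z Kz yz]; last by apply: ye => //; exact: lt_trans de.
  apply: le_lt_trans (ler_distD y x' w) _.
  by rewrite addrC -ltrBrDr; exact: le_lt_trans dr.
have [z Kz zQ] := nested_balls cK Kx rho0 step.
have [n Fnz] := cover z Kz; have [x1 [d [Qn x1z]]] := zQ n.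
exact: Qn z Kz x1z Fnz.
Qed.

Lemma ler_dist3 (a b c d : W) : `|a - d| <= `|a - b| + `|b - c| + `|c - d|.
Proof. by apply: le_trans (ler_distD b a d) _; rewrite -addrA lerD2l ler_distD. Qed.

Section Oscillation.
Variables (K : set V) (g : nat -> V -> W) (f : V -> W).
Hypothesis cK : compact K.
Hypothesis g_cont : forall n, {within K, continuous (g n)}.
Hypothesis g_cvg : forall x, K x -> (fun n => g n x) @ \oo --> f x.

(* Baire applied to the uniform Cauchy sets [F n], relatively closed by the
   continuity of the [g i]; on a ball where [F n] holds, [f] stays close to [g n]. *)
Lemma small_oscillation_ball e x rho : 0 < e -> K x -> 0 < rho -> exists x1 d,
  [/\ K x1, 0 < d, (forall y, `|x1 - y| < d -> `|x - y| < rho) &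
    forall y z, K y -> K z -> `|x1 - y| < d -> `|x1 - z| < d -> `|f y - f z| <= e].
Proof.
move=> e0 Kx rho0; pose c := e / 6; have c0 : 0 < c by rewrite divr_gt0.
pose F n := [set y | forall i j, (n <= i)%N -> (n <= j)%N -> `|g i y - g j y| <= c].
have cover y : K y -> exists n, F n y.
  move=> Ky; have c20 : 0 < c / 2 by rewrite divr_gt0.
  have [N fN] := cvg_dist_eventually (g_cvg Ky) c20; exists N => i j Ni Nj.
  have := fN i Ni; have := fN j Nj; have := ler_distD (f y) (g i y) (g j y).
  rewrite (distrC (g i y) (f y)); lra.
have Fclosed n y : K y -> ~ F n y ->
    exists2 e, 0 < e & forall z, K z -> `|y - z| < e -> ~ F n z.
  move=> Ky nFy.
  have [i [j [ni nj gij]]] :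
      exists i j, [/\ (n <= i)%N, (n <= j)%N & c < `|g i y - g j y|].
    apply: contrapT => nex; apply: nFy => i j ni nj; rewrite leNgt; apply/negP => gij.
    by apply: nex; exists i, j.
  pose eta := (`|g i y - g j y| - c) / 2.
  have eta0 : 0 < eta by rewrite divr_gt0 // subr_gt0.
  have [d1 d10 yd1] := within_continuous_dist (@g_cont i) Ky eta0.
  have [d2 d20 yd2] := within_continuous_dist (@g_cont j) Ky eta0.
  exists (Num.min d1 d2) => [|z Kz]; first by rewrite lt_min d10 d20.
  rewrite lt_min => /andP[yz1 yz2] Fz.
  have := yd1 z Kz yz1; have := yd2 z Kz yz2; have := Fz i j ni nj.
  have := ler_dist3 (g i y) (g i z) (g j z) (g j y).
  by rewrite (distrC (g j z) (g j y)) /eta; lra.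
have [n [x1 [d1 [Kx1 d10 sub1 Fn]]]] := compact_baire cK cover Fclosed Kx rho0.
have f_near_gn y : K y -> `|x1 - y| < d1 -> `|f y - g n y| <= 2 * c.
  move=> Ky x1y; have [N fN] := cvg_dist_eventually (g_cvg Ky) c0.
  have := fN (maxn N n) (leq_maxl _ _).
  have := Fn y Ky x1y (maxn N n) n (leq_maxr _ _) (leqnn _).
  have := ler_distD (g (maxn N n) y) (f y) (g n y); lra.
have [d2 d20 x1d2] := within_continuous_dist (@g_cont n) Kx1 c0.
exists x1, (Num.min d1 d2); split => //; first by rewrite lt_min d10 d20.
  by move=> y; rewrite lt_min => /andP[/sub1].
move=> y z Ky Kz; rewrite !lt_min => /andP[y1 y2] /andP[z1 z2].
have := f_near_gn y Ky y1; have := f_near_gn z Kz z1.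
have := x1d2 y Ky y2; have := x1d2 z Kz z2.
have := ler_dist3 (f y) (g n y) (g n z) (f z); rewrite (distrC (g n z) (f z)).
have := ler_distD (g n x1) (g n y) (g n z); rewrite (distrC (g n y) (g n x1)) /c; lra.
Qed.

Lemma baire_limit_continuity_point : K !=set0 ->
  exists2 z, K z & f @ within K (nbhs z) --> f z.
Proof.
move=> [x0 Kx0].
pose Q (k : nat) x d := forall y z, K y -> K z -> `|x - y| < d -> `|x - z| < d ->
   `|f y - f z| <= k.+1%:R^-1.
have step k x rho : K x -> 0 < rho -> (forall y, `|x - y| < rho -> `|x0 - y| < 1) ->
    exists x' d,
      [/\ K x', 0 < d, (forall y, `|x' - y| <= d -> `|x - y| < rho) & Q k x' d].
  move=> Kx rho0 _; have k0 : 0 < k.+1%:R^-1 :> R by rewrite invr_gt0 ltr0Sn.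
  have [x1 [d [Kx1 d0 sub osc]]] := small_oscillation_ball k0 Kx rho0.
  have d2d : d / 2 < d by rewrite gtr_pMr // invf_lt1 // ltr1n.
  exists x1, (d / 2); split => // [|y hy|y z Ky Kz hy hz]; first by rewrite divr_gt0.
    by apply: sub; exact: le_lt_trans hy d2d.
  by apply: osc => //; exact: lt_trans d2d.
have [z Kz zQ] := nested_balls cK Kx0 ltr01 step.
exists z => //; apply: within_cvg_dist => e e0.
have [k ke] := natSinv_lt e0; have [x [d [Qk xz]]] := zQ k.
exists (d - `|x - z|) => [|y Ky zy]; first by rewrite subr_gt0.
by apply: le_trans (ltW ke); apply: Qk => //; have := ler_distD z x y; lra.
Qed.

End Oscillation.
End ContinuityPoint.

Section RationalBalls.
Variables (R : realType) (r : nat).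
Local Notation V := 'rV[R]_r.

Lemma mx_norm_lt (A : V) (e : R) : 0 < e -> (forall i j, `|A i j| < e) -> `|A| < e.
Proof.
move=> e0 Ae; rewrite [`|A|]/Num.Def.normr /= mx_normrE.
by apply: bigmax_lt => // ij _; exact: Ae.
Qed.

Lemma rational_approx (x : V) (e : R) : 0 < e ->
  exists q : 'rV[rat]_r, `|map_mx ratr q - x| < e.
Proof.
move=> e0.
have xq j : exists q : rat, `|ratr q - x 0 j| < e.
  have /rat_in_itvoo[q] : x 0 j - e < x 0 j + e by lra.
  rewrite in_itv /= => /andP[xq qx]; exists q; rewrite ltr_norml; apply/andP; lra.
have [q qx] := choice xq.
by exists (\row_j q j); apply: mx_norm_lt => // i j; rewrite ord1 !mxE.
Qed.

Definition rat_ball (qk : 'rV[rat]_r * nat) : set V :=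
  [set y | `|map_mx ratr qk.1 - y| < qk.2.+1%:R^-1].

Lemma rat_ball_separates (C : set V) z : closed C -> ~ C z ->
  exists qk, rat_ball qk z /\ rat_ball qk `&` C = set0.
Proof.
move=> cC nCz; have : open (~` C) by rewrite openC.
move=> /(_ z nCz)/nbhs_normP[d /= d0 zd].
have [k kd] : exists k : nat, k.+1%:R^-1 < d / 2 by apply: natSinv_lt; rewrite divr_gt0.
have k0 : 0 < k.+1%:R^-1 :> R by rewrite invr_gt0 ltr0Sn.
have [q qz] := rational_approx z k0.
exists (q, k); split => //; rewrite -subset0 => y [/= qy Cy]; apply: (zd y) => //=.
apply: le_lt_trans (ler_distD (map_mx ratr q) z y) _.
rewrite distrC; apply: lt_trans (ltrD qz qy) _.
by apply: lt_le_trans (ltrD kd kd) _; rewrite -splitr.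
Qed.

End RationalBalls.

Section SolvableRemoval.
Variables (R : realType) (r m : nat).
Local Notation V := 'rV[R]_r.
Local Notation W := 'rV[R]_m.

Lemma baire_oneS (E K : set V) (f : V -> W) : K `<=` E -> baire_one E f -> baire_one K f.
Proof.
move=> KE [g [gc gf]]; exists g; split=> [n|x Kx]; last exact/gf/KE.
exact: continuous_subspaceW (gc n).
Qed.

Lemma baire_one_continuity_point (K : set V) (f : V -> W) :
  compact K -> K !=set0 -> baire_one K f -> exists2 z, K z & ~ disc_set K f z.
Proof.
move=> cK K0 [g [gc gf]].
by have [z Kz fz] := baire_limit_continuity_point cK gc gf K0; exists z => // -[].
Qed.

Definition rat_ball_enum (n : nat) : set V :=
  if @unpickle ('rV[rat]_r * nat)%type n is Some qk then rat_ball qk else set0.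

Lemma closed_subsets_tower (E : set V) (f : V -> W) : closed E ->
  (forall K, closed K -> K `<=` E -> closed (disc_set K f)) ->
  tower E (fun X => disc_set X f) (fun X => closed X /\ X `<=` E).
Proof.
move=> cE cD; split.
- by split.
- by move=> X [cX XE]; split; [exact: cD X cX XE | move=> x [/XE]].
- move=> I A g [i Ai] gE; split; first by apply: closed_bigI => j /gE[].
  by move=> x gx; apply: (gE i Ai).2; exact: gx.
Qed.

Lemma rat_ball_enum_separates (E : set V) (f : V -> W) : compact E -> solvable E f ->
  forall X, closed X /\ X `<=` E -> X !=set0 ->
  exists n, rat_ball_enum n `&` X !=set0 /\ rat_ball_enum n `&` disc_set X f = set0.
Proof.
move=> cE [fB cD] X [cX XE] X0.
have cX' : compact X by exact: subclosed_compact cX cE XE.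
have [z Xz nDz] := baire_one_continuity_point cX' X0 (baire_oneS XE fB).
have [qk [qkz qkD]] := rat_ball_separates (cD X cX XE) nDz.
by exists (pickle qk); rewrite /rat_ball_enum pickleK; split => //; exists z.
Qed.

End SolvableRemoval.

Theorem mainTheorem6 (R : realType) (r m : nat) (E : set 'rV[R]_r)
    (f : 'rV[R]_r -> 'rV[R]_m) :
  compact_domain E -> solvable E f ->
  exists (T : Type) (lt : T -> T -> Prop) (S : T -> set 'rV[R]_r) (t : T),
    countable_wellorder lt /\ removed_sequence lt E f S /\ S t = set0.
Proof.
move=> [_ [_ cE]] solf.
have cEc : closed E by apply: compact_closed => //; exact: norm_hausdorff.
have D_sub X : disc_set X f `<=` X by move=> x [].
exact: (exists_removal_sequence D_sub (closed_subsets_tower cEc solf.2)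
  (rat_ball_enum_separates cE solf)).
Qed.
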